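(* Let $(c_n)_{n\ge0}$ be a sequence (of elements of a commutative ring, or indeterminates) and $\alpha,\beta$ variables. Then for all positive integers $n$, $$ \det_{0\le i,j\le n-1}\big(\alpha c_{i+j}+c_{i+j+1}\big)\det_{0\le i,j\le n-1}\big(\beta c_{i+j}+c_{i+j+1}\big) =-\det_{0\le i,j\le n}\big(c_{i+j}\big)\det_{0\le i,j\le n-2}\big(\alpha\beta c_{i+j}+(\alpha+\beta)c_{i+j+1}+c_{i+j+2}\big) +\det_{0\le i,j\le n-1}\big(c_{i+j}\big)\det_{0\le i,j\le n-1}\big(\alpha\beta c_{i+j}+(\alpha+\beta)c_{i+j+1}+c_{i+j+2}\big). $$
   Context: The determinant of an empty ($0\times 0$) matrix equals $1$. *)

From mathcomp Require Import all_boot all_order all_algebra.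
Set Implicit Arguments. Unset Strict Implicit. Unset Printing Implicit Defensive.
Import GRing.Theory.
Local Open Scope ring_scope.

(* hdet m f = det_{0 <= i,j <= m-1} (f (i+j)), an m x m Hankel determinant;
   for m = 0 this is the empty determinant, equal to 1. *)
Definition hdet (R : comPzRingType) (m : nat) (f : nat -> R) : R :=
  \det (\matrix_(i < m, j < m) f (i + j)%N).

(* Let F_x be the (k+1) x (k+1) matrix whose row i < k is x e_i + e_(i+1) and whose
   last row is e_0, so that det F_x = (-1)^k.  Then F_a H(c) F_b^T, with H(c) the
   Hankel matrix of c of order k+1, is the Hankel matrix of
   a b c_k + (a+b) c_(k+1) + c_(k+2) bordered by the row (b c_j + c_(j+1))_j, the
   column (a c_i + c_(i+1))_i and the corner c_0; its determinant is det H(c).  The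
   theorem is the Desnanot-Jacobi identity for the last two rows and columns of this
   bordered matrix: each of the minors involved is again a bordered Hankel matrix, a
   Hankel matrix, or a Hankel matrix multiplied by some F_x.  Desnanot-Jacobi is in
   turn Jacobi's identity for the minors of the adjugate. *)

From HB Require Import structures.
From mathcomp Require Import all_boot all_order all_algebra ring.
Set Implicit Arguments. Unset Strict Implicit. Unset Printing Implicit Defensive.
Import GRing.Theory.
Local Open Scope ring_scope.

Section AdjugateMinors.
Variable R : comPzRingType.

Lemma det_mx22 (A : 'M[R]_2) : \det A = A 0 0 * A 1 1 - A 0 1 * A 1 0.
Proof.
rewrite (expand_det_row _ 0) !big_ord_recl big_ord0 addr0 /cofactor !det_mx11 !mxE.
have -> : lift (0 : 'I_2) (0 : 'I_1) = 1 by apply: val_inj.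
have -> : lift (1 : 'I_2) (0 : 'I_1) = 0 by apply: val_inj.
by rewrite /= expr0 expr1 !mul1r mulN1r mulrN.
Qed.

Lemma det_castmx n n' (e : n = n') (A : 'M[R]_n) : \det (castmx (e, e) A) = \det A.
Proof. by case: n' / e; rewrite castmx_id. Qed.

Lemma cofactor_castmx n n' (e : n = n') (A : 'M[R]_n) i j :
  cofactor (castmx (e, e) A) i j = cofactor A (cast_ord (esym e) i) (cast_ord (esym e) j).
Proof. by case: n' / e i j => i j; rewrite castmx_id !cast_ord_id. Qed.

Lemma det_drsubmx_adj_lreg m k (N : 'M[R]_(m + k.+1)) : GRing.lreg (\det N) ->
  \det (drsubmx (\adj N)) = \det (ulsubmx N) * \det N ^+ k.
Proof.
move=> reg_detN; set A := \adj N.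
have := mul_mx_adj N.
rewrite -[N in N *m _](submxK N) -[A in _ *m A](submxK A) mulmx_block scalar_mx_block.
case/eq_block_mx => _ NA12 _ NA22.
have NX : N *m block_mx 1%:M (ursubmx A) 0 (drsubmx A)
          = block_mx (ulsubmx N) 0 (dlsubmx N) (\det N)%:M.
  by rewrite -[N in N *m _](submxK N) mulmx_block NA12 NA22 !mulmx1 !mulmx0 !addr0.
move/(congr1 determinant): NX.
rewrite det_mulmx det_ublock det_lblock det1 mul1r det_scalar exprS => detNX.
by apply: reg_detN; rewrite detNX mulrCA.
Qed.

End AdjugateMinors.

(* Polynomials need a nonzero ring: this is R with that structure, given 1 != 0. *)
Definition nzRing_of (R : comPzRingType) of (1 : R) != 0 : Type := R.
HB.instance Definition _ (R : comPzRingType) (R1_neq0 : (1 : R) != 0) :=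
  GRing.ComPzRing.on (nzRing_of R1_neq0).
HB.instance Definition _ (R : comPzRingType) (R1_neq0 : (1 : R) != 0) :=
  GRing.PzSemiRing_isNonZero.Build (nzRing_of R1_neq0) R1_neq0.

Lemma det_drsubmx_adj (R : comPzRingType) m k (N : 'M[R]_(m + k.+1)) :
  \det (drsubmx (\adj N)) = \det (ulsubmx N) * \det N ^+ k.
Proof.
have [R1_0 | R1_neq0] := eqVneq (1 : R) 0.
  have R_0 (x : R) : x = 0 by rewrite -[x]mulr1 R1_0 mulr0.
  by rewrite [LHS]R_0 [RHS]R_0.
pose S : comNzRingType := nzRing_of R1_neq0.
(* The determinant of 'X + N is monic, hence regular, and N is its value at 'X = 0. *)
pose XN := char_poly_mx (- N : 'M[S]_(m + k.+1)).
have reg_detXN : GRing.lreg (\det XN) := monic_lreg (char_poly_monic _).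
have XN_0 : map_mx (horner_eval 0) XN = N.
  apply/matrixP => i j; rewrite !mxE horner_evalE !hornerE /=.
  by rewrite hornerMn hornerX mul0rn sub0r opprK.
have := congr1 (horner_eval 0) (det_drsubmx_adj_lreg reg_detXN).
by rewrite rmorphM rmorphXn -!det_map_mx map_drsubmx map_mx_adj map_ulsubmx XN_0.
Qed.

Definition ord_penult {m} : 'I_m.+2 := Ordinal (leqnSn m.+1).

Lemma lift_penult k (i : 'I_k.+1) :
  lift ord_penult i = (if i == k :> nat then k.+1 else i) :> nat.
Proof.
rewrite /= /bump; case: eqP => [->|/eqP i_neq_k]; first by rewrite leqnn.
by rewrite leqNgt ltn_neqAle i_neq_k -ltnS ltn_ord.
Qed.

Lemma signr_addnn (R : pzRingType) n : (-1) ^+ (n + n) = 1 :> R.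
Proof. by rewrite exprD -expr2 sqrr_sign. Qed.

Lemma desnanot_jacobi (R : comPzRingType) m (M : 'M[R]_m.+2) :
  \det M * \det (row' ord_max (col' ord_max (row' ord_max (col' ord_max M))))
  = \det (row' ord_max (col' ord_max M)) * \det (row' ord_penult (col' ord_penult M))
    - \det (row' ord_penult (col' ord_max M)) * \det (row' ord_max (col' ord_penult M)).
Proof.
pose e := esym (addn2 m); pose N := castmx (e, e) M.
have := det_drsubmx_adj (N : 'M_(m + 1.+1)).
rewrite expr1 det_castmx det_mx22 !mxE !cofactor_castmx.
have -> : cast_ord (esym e) (rshift m (0 : 'I_2)) = ord_penult.
  by apply: val_inj; rewrite /= addn0.
have -> : cast_ord (esym e) (rshift m (1 : 'I_2)) = ord_max.
  by apply: val_inj; rewrite /= addn1.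
have -> : ulsubmx N = row' ord_max (col' ord_max (row' ord_max (col' ord_max M))).
  apply/matrixP => i j; rewrite !mxE castmxE.
  by congr (M _ _); apply: ord_inj; rewrite !lift_max.
rewrite /cofactor /= !signr_addnn !mul1r (addnC m.+1) mulrACA -exprD signr_addnn mul1r.
by move=> jacobi; rewrite [LHS]mulrC -jacobi mulrC [X in _ - X]mulrC.
Qed.

Section BorderedHankel.
Variable R : comPzRingType.
Implicit Types (f : nat -> R) (x y : R).

Definition hankel_mx m f : 'M[R]_m := \matrix_(i < m, j < m) f (i + j)%N.

Definition xshift x f k := x * f k + f k.+1.

Definition shift_mx k x : 'M[R]_k.+1 :=
  \matrix_(i, j) if i == k :> nat then (j == 0 :> nat)%:R
                 else x * (j == i :> nat)%:R + (j == i.+1 :> nat)%:R.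

Definition bordered_hankel k x y f : 'M[R]_k.+1 :=
  \matrix_(i, j) if i == k :> nat then (if j == k :> nat then f 0 else xshift y f j)
                 else if j == k :> nat then xshift x f i
                 else xshift x (xshift y f) (i + j).

Lemma sum_delta k (g : nat -> R) t : (t < k)%N ->
  \sum_(j < k) (j == t :> nat)%:R * g j = g t.
Proof.
move=> lt_tk; rewrite (bigD1 (Ordinal lt_tk)) //= eqxx mul1r big1 ?addr0 // => j.
by rewrite -val_eqE /= => /negbTE->; rewrite mul0r.
Qed.

Lemma sum_shift_mx k x (i : 'I_k.+1) (g : nat -> R) :
  \sum_(j < k.+1) shift_mx k x i j * g j = if i == k :> nat then g 0 else x * g i + g i.+1.
Proof.
under eq_bigr do rewrite mxE.
case: eqP => [_|/eqP i_neq_k]; first exact: sum_delta.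
under eq_bigr do rewrite mulrDl -mulrA.
by rewrite big_split /= -mulr_sumr !sum_delta // ltnS ltn_neqAle i_neq_k -ltnS ltn_ord.
Qed.

Lemma det_shift_mx k x : \det (shift_mx k x) = (-1) ^+ k.
Proof.
rewrite (expand_det_row _ ord_max) big_ord_recl big1 ?addr0; last first.
  by move=> j _; rewrite mxE eqxx mul0r.
rewrite mxE eqxx mul1r /cofactor addn0 det_trig.
  rewrite big1 ?mulr1 // => i _; rewrite !mxE lift_max lift0 ltn_eqF //.
  by rewrite eqxx (gtn_eqF (ltnSn i)) mulr0 add0r.
apply/is_trig_mxP => i j lt_ij; rewrite !mxE lift_max lift0 /=.
by case: ifP; rewrite //= eqSS (gtn_eqF lt_ij) (gtn_eqF (leqW lt_ij)) mulr0 add0r.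
Qed.

Lemma mul_shift_mx k n x (h : nat -> nat -> R) :
  shift_mx k x *m (\matrix_(i < k.+1, j < n) h i j)
  = \matrix_(i, j) if i == k :> nat then h 0%N j else x * h i j + h i.+1 j.
Proof.
apply/matrixP => i j; rewrite !mxE.
under eq_bigr do rewrite [X in _ * X]mxE.
exact: (sum_shift_mx _ _ (h^~ j)).
Qed.

Lemma mul_mx_tr_shift k n y (h : nat -> nat -> R) :
  (\matrix_(i < n, j < k.+1) h i j) *m (shift_mx k y)^T
  = \matrix_(i, j) if j == k :> nat then h i 0%N else y * h i j + h i j.+1.
Proof.
apply/matrixP => i j; rewrite !mxE.
under eq_bigr do rewrite [X in X * _]mxE [X in _ * X]mxE mulrC.
exact: (sum_shift_mx _ _ (h i)).
Qed.

Lemma bordered_hankelE k x y f :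
  shift_mx k x *m hankel_mx k.+1 f *m (shift_mx k y)^T = bordered_hankel k x y f.
Proof.
rewrite (mul_shift_mx _ _ _ (fun i j => f (i + j)%N)).
rewrite (mul_mx_tr_shift _ _ _ (fun i j =>
  if i == k then f (0 + j)%N else x * f (i + j)%N + f (i.+1 + j)%N)).
apply/matrixP => i j; rewrite !mxE /xshift !addn0 !addSn !addnS.
by case: (i == k :> nat); case: (j == k :> nat) => //=; ring.
Qed.

Lemma det_bordered_hankel k x y f : \det (bordered_hankel k x y f) = hdet k.+1 f.
Proof.
by rewrite -bordered_hankelE !det_mulmx det_tr !det_shift_mx mulrAC -expr2 sqrr_sign mul1r.
Qed.

Lemma hankel_mx_minor_max k f :
  row' ord_max (col' ord_max (hankel_mx k.+1 f)) = hankel_mx k f.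
Proof. by apply/matrixP => i j; rewrite !mxE !lift_max. Qed.

Lemma bordered_hankel_minor_max k x y f :
  row' ord_max (col' ord_max (bordered_hankel k.+1 x y f))
  = hankel_mx k.+1 (xshift x (xshift y f)).
Proof. by apply/matrixP => i j; rewrite !mxE !lift_max !ltn_eqF. Qed.

Lemma bordered_hankel_minor_penult k x y f :
  row' ord_penult (col' ord_penult (bordered_hankel k.+1 x y f)) = bordered_hankel k x y f.
Proof.
apply/matrixP => i j; rewrite !mxE !lift_penult.
by case: (i == k :> nat); case: (j == k :> nat); rewrite /= ?eqxx ?ltn_eqF.
Qed.

Lemma bordered_hankel_minor_penult_max k x y f :
  row' ord_penult (col' ord_max (bordered_hankel k.+1 x y f))
  = shift_mx k x *m hankel_mx k.+1 (xshift y f).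
Proof.
rewrite (mul_shift_mx _ _ _ (fun i j => xshift y f (i + j)%N)).
apply/matrixP => i j; rewrite !mxE lift_penult lift_max.
by case: (i == k :> nat); rewrite /= ?eqxx ?ltn_eqF.
Qed.

Lemma bordered_hankel_minor_max_penult k x y f :
  row' ord_max (col' ord_penult (bordered_hankel k.+1 x y f))
  = hankel_mx k.+1 (xshift x f) *m (shift_mx k y)^T.
Proof.
rewrite (mul_mx_tr_shift _ _ _ (fun i j => xshift x f (i + j)%N)).
apply/matrixP => i j; rewrite !mxE lift_penult lift_max.
case: (j == k :> nat); rewrite /= ?eqxx ?ltn_eqF ?addn0 //.
by rewrite /xshift !addnS; ring.
Qed.

End BorderedHankel.

Lemma eq_hdet (R : comPzRingType) m (f g : nat -> R) : f =1 g -> hdet m f = hdet m g.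
Proof. by move=> eq_fg; congr (\det _); apply/matrixP => i j; rewrite !mxE eq_fg. Qed.

Theorem lemma9 (R : comPzRingType) (c : nat -> R) (a b : R) (n : nat) :
  (0 < n)%N ->
  hdet n (fun k => a * c k + c k.+1) * hdet n (fun k => b * c k + c k.+1)
  = - (hdet n.+1 c *
       hdet n.-1 (fun k => a * b * c k + (a + b) * c k.+1 + c k.+2))
    + hdet n c * hdet n (fun k => a * b * c k + (a + b) * c k.+1 + c k.+2).
Proof.
case: n => // k _ /=.
have ab_shift m : hdet m (fun k => a * b * c k + (a + b) * c k.+1 + c k.+2)
                  = hdet m (xshift a (xshift b c)).
  by apply: eq_hdet => i; rewrite /xshift; ring.
have := desnanot_jacobi (bordered_hankel k.+1 a b c).
rewrite bordered_hankel_minor_max hankel_mx_minor_max bordered_hankel_minor_penult.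
rewrite bordered_hankel_minor_penult_max bordered_hankel_minor_max_penult.
rewrite !det_bordered_hankel !det_mulmx det_tr !det_shift_mx -!/(hdet _ _).
rewrite [_ * (-1) ^+ k]mulrC mulrACA -expr2 sqrr_sign mul1r !ab_shift => ->.
ring.
Qed.
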